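(* Let $\gamma$ be a smooth Jordan curve, fix $r\in(0,1/2)$, and let $T_n\in T_{r,\theta_n}$ ($\theta_n\in(0,\pi)$) be a sequence of isosceles trapezoids inscribed in $\gamma$ converging to a point $p\in\gamma$ (all four vertices converge to $p$). Then $p$ is a vertex of $\gamma$, i.e. the derivative of the curvature of $\gamma$ vanishes at $p$.
   Context: For $r\in(0,1/2]$, $\theta\in(0,\pi)$ and $z\neq w\in\mathbb{C}$, let $z',w'$ be obtained by rotating $z,w$ clockwise by angle $\theta$ about the point $(1-r)z+rw$. $T_{r,\theta}$ is the set of 4-point sets $\{z,w,z',w'\}\subset\mathbb{C}$ obtained this way (isosceles trapezoids of aspect ratio $r$ and angle $\theta$); such a set is inscribed in $\gamma$ if it is contained in $\gamma$. *)

(* concrete reals R, with Coquelicot for derivatives and limits.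
   Points of the complex plane are represented as pairs (x, y) : R * R. *)
From Stdlib Require Import Reals.
From Coquelicot Require Import Coquelicot.
Open Scope R_scope.

Definition smooth (f : R -> R) : Prop :=
  forall (n : nat) (x : R), ex_derive (Derive_n f n) x.

Definition smooth_jordan_curve (gx gy : R -> R) (L : R) : Prop :=
  0 < L /\
  smooth gx /\ smooth gy /\
  (forall t, gx (t + L) = gx t /\ gy (t + L) = gy t) /\
  (forall t, 0 < (Derive gx t) ^ 2 + (Derive gy t) ^ 2) /\
  (forall s t, 0 <= s < L -> 0 <= t < L ->
     gx s = gx t -> gy s = gy t -> s = t).

Definition on_curve (gx gy : R -> R) (q : R * R) : Prop :=
  exists t, gx t = fst q /\ gy t = snd q.

Definition curvature (gx gy : R -> R) (t : R) : R :=
  (Derive gx t * Derive_n gy 2 t - Derive gy t * Derive_n gx 2 t)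
  / (sqrt ((Derive gx t) ^ 2 + (Derive gy t) ^ 2)) ^ 3.

Definition is_vertex (gx gy : R -> R) (p : R * R) : Prop :=
  exists t, gx t = fst p /\ gy t = snd p /\ Derive (curvature gx gy) t = 0.

Definition rot_cw (c : R * R) (th : R) (q : R * R) : R * R :=
  let a := fst q - fst c in
  let b := snd q - snd c in
  (fst c + (a * cos th + b * sin th), snd c + (- a * sin th + b * cos th)).

Definition trap_center (r : R) (z w : R * R) : R * R :=
  ((1 - r) * fst z + r * fst w, (1 - r) * snd z + r * snd w).

Definition trap_z' (r th : R) (z w : R * R) : R * R := rot_cw (trap_center r z w) th z.
Definition trap_w' (r th : R) (z w : R * R) : R * R := rot_cw (trap_center r z w) th w.

Definition trapezoid (r th : R) (z w : R * R) : R * R -> Prop :=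
  fun q => q = z \/ q = w \/ q = trap_z' r th z w \/ q = trap_w' r th z w.

Definition inscribed (gx gy : R -> R) (T : R * R -> Prop) : Prop :=
  forall q, T q -> on_curve gx gy q.

Definition pt_lim (u : nat -> R * R) (p : R * R) : Prop :=
  is_lim_seq (fun n => fst (u n)) (fst p) /\ is_lim_seq (fun n => snd (u n)) (snd p).

From Coquelicot Require Import Coquelicot.
From Stdlib Require Import Reals Lra Lia Nsatz List Sorted Permutation ClassicalEpsilon.
From Stdlib Require Orders Mergesort.
Import ListNotations.
Open Scope R_scope.

(* The four vertices of an isosceles trapezoid lie on a circle
   [n . (|q|^2, q_x, q_y, 1) = 0].  Along the curve [g = (gx, gy)], the function
   [f s = n . (|g s|^2, g s, 1)] then has four zeros near the parameter [t0] of
   [p]; let [a] be one of them.  By Rolle's theorem [f'], [f''] and [f''']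
   vanish at nearby parameters [b], [c], [d].  Hence the vectors [F_0 a],
   [F_1 b], [F_2 c], [F_3 d], where [F_k] is the k-th derivative of
   [(|g|^2, g, 1)], are orthogonal to [n <> 0] and their determinant vanishes.
   As the trapezoids shrink to [p], the determinant of [F_0 t0, ..., F_3 t0]
   vanishes; it is [2 |g'|^5] times the derivative of the curvature at [t0]. *)

Lemma Rolle_is_derive (f f' : R -> R) (a b : R) :
  a < b -> (forall t, is_derive f t (f' t)) -> f a = 0 -> f b = 0 ->
  exists c, a < c < b /\ f' c = 0.
Proof.
  intros Hab Hd Ha Hb.
  destruct (MVT_cor2 f f' a b Hab) as [c [Hc Hac]].
  { intros c _. apply is_derive_Reals, Hd. }
  exists c. split; [exact Hac|].
  rewrite Ha, Hb in Hc.
  destruct (Rmult_integral (f' c) (b - a)); [lra | assumption | lra].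
Qed.

Lemma Rolle_sorted (f f' : R -> R) (hi a : R) (l : list R) :
  (forall t, is_derive f t (f' t)) ->
  Sorted Rlt (a :: l) -> Forall (fun t => t < hi /\ f t = 0) (a :: l) ->
  exists l', length l' = length l /\ Sorted Rlt l' /\
    Forall (fun t => a < t < hi /\ f' t = 0) l'.
Proof.
  intros Hd. revert a. induction l as [|b l IH]; intros a Hs Hz.
  - exists []. repeat constructor.
  - apply Sorted_inv in Hs as [Hs Hab]. apply HdRel_inv in Hab.
    apply Forall_inv in Hz as Ha. apply Forall_inv_tail in Hz.
    destruct (IH b Hs Hz) as [l' [Hlen [Hs' Hz']]].
    destruct (Rolle_is_derive f f' a b Hab Hd (proj2 Ha) (proj2 (Forall_inv Hz)))
      as [c [Hc Hc']].
    exists (c :: l'). split; [simpl; congruence|]. split.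
    + constructor; [exact Hs'|].
      destruct l' as [|d l'']; constructor. apply Forall_inv in Hz'. lra.
    + constructor; [split; [|exact Hc']|].
      * apply Forall_inv in Hz. lra.
      * eapply Forall_impl; [|exact Hz']. intros t Ht. lra.
Qed.

Lemma Rolle_iter_sorted (h : nat -> R -> R) (n : nat) (hi a : R) (l : list R) :
  (forall k t, (k < n)%nat -> is_derive (h k) t (h (S k) t)) ->
  (n <= length l)%nat -> Sorted Rlt (a :: l) ->
  Forall (fun t => t < hi /\ h O t = 0) (a :: l) ->
  exists w, a <= w < hi /\ h n w = 0.
Proof.
  revert h a l. induction n as [|n IH]; intros h a l Hd Hlen Hs Hz.
  - exists a. apply Forall_inv in Hz. split; [lra | apply Hz].
  - destruct (Rolle_sorted (h O) (h 1%nat) hi a l) as [[|b l'] [Hlen' [Hs' Hz']]];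
      [intros t; apply Hd; lia | exact Hs | exact Hz | simpl in *; lia |].
    destruct (IH (fun k => h (S k)) b l') as [w [Hw Hw']].
    + intros k t Hk. apply Hd. lia.
    + simpl in Hlen'. lia.
    + exact Hs'.
    + eapply Forall_impl; [|exact Hz']. intros t Ht. lra.
    + exists w. apply Forall_inv in Hz'. split; [lra | exact Hw'].
Qed.

Module RLeBool <: Orders.TotalLeBool.
  Definition t := R.
  Definition leb (x y : R) : bool := if Rle_dec x y then true else false.
  Lemma leb_total x y : leb x y = true \/ leb y x = true.
  Proof. unfold leb. destruct (Rle_dec x y), (Rle_dec y x); auto. lra. Qed.
End RLeBool.

Module RSort := Mergesort.Sort RLeBool.

Lemma NoDup_sort_strict (l : list R) :
  NoDup l -> exists l', Permutation l l' /\ Sorted Rlt l'.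
Proof.
  intros Hnd. exists (RSort.sort l). split; [apply RSort.Permuted_sort|].
  generalize (Permutation_NoDup (RSort.Permuted_sort l) Hnd).
  induction (RSort.Sorted_sort l) as [|x m Hm IH Hx]; intros Hnd'; constructor.
  - apply IH. now apply NoDup_cons_iff in Hnd'.
  - destruct Hx as [|y m' Hxy]; constructor.
    unfold is_true, RLeBool.leb in Hxy. destruct (Rle_dec x y) as [Hle|]; [|discriminate].
    destruct (Rle_lt_or_eq_dec x y Hle) as [|<-]; [assumption|].
    apply NoDup_cons_iff in Hnd' as [Hx _]. exfalso. apply Hx. now left.
Qed.

Lemma Rolle_iter (h : nat -> R -> R) (n : nat) (lo hi : R) (l : list R) :
  (forall k t, (k < n)%nat -> is_derive (h k) t (h (S k) t)) ->
  NoDup l -> (n < length l)%nat ->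
  Forall (fun t => lo < t < hi /\ h O t = 0) l ->
  exists w, lo < w < hi /\ h n w = 0.
Proof.
  intros Hd Hnd Hlen Hz.
  destruct (NoDup_sort_strict l Hnd) as [[|a l'] [Hp Hs]].
  { apply Permutation_length in Hp. simpl in Hp. lia. }
  apply Permutation_length in Hp as Hlen'. simpl in Hlen'.
  apply (Permutation_Forall Hp) in Hz.
  destruct (Rolle_iter_sorted h n hi a l') as [w [Hw Hw']]; [assumption | lia | assumption | |].
  - eapply Forall_impl; [|exact Hz]. intros t Ht. split; apply Ht.
  - exists w. apply Forall_inv in Hz. split; [lra | exact Hw'].
Qed.

Definition V4 := (R * R * R * R)%type.

Definition dot4 (u v : V4) : R :=
  let '(u1, u2, u3, u4) := u in let '(v1, v2, v3, v4) := v in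
  u1 * v1 + u2 * v2 + u3 * v3 + u4 * v4.

Definition det3 (a1 a2 a3 b1 b2 b3 c1 c2 c3 : R) : R :=
  a1 * (b2 * c3 - b3 * c2) - a2 * (b1 * c3 - b3 * c1) + a3 * (b1 * c2 - b2 * c1).

Definition det4 (a b c d : V4) : R :=
  let '(a1, a2, a3, a4) := a in let '(b1, b2, b3, b4) := b in
  let '(c1, c2, c3, c4) := c in let '(d1, d2, d3, d4) := d in
  a1 * det3 b2 b3 b4 c2 c3 c4 d2 d3 d4 - b1 * det3 a2 a3 a4 c2 c3 c4 d2 d3 d4
  + c1 * det3 a2 a3 a4 b2 b3 b4 d2 d3 d4 - d1 * det3 a2 a3 a4 b2 b3 b4 c2 c3 c4.

Lemma det4_orthogonal (a b c d n : V4) :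
  fst (fst (fst n)) <> 0 ->
  dot4 a n = 0 -> dot4 b n = 0 -> dot4 c n = 0 -> dot4 d n = 0 ->
  det4 a b c d = 0.
Proof.
  destruct a as [[[a1 a2] a3] a4], b as [[[b1 b2] b3] b4], c as [[[c1 c2] c3] c4],
    d as [[[d1 d2] d3] d4], n as [[[n1 n2] n3] n4].
  unfold dot4, det4; simpl. intros Hn Ha Hb Hc Hd.
  apply (Rmult_eq_reg_l n1); [|exact Hn]. rewrite Rmult_0_r.
  (* [n1 * det] is the determinant whose first column is replaced by the dot products with [n]. *)
  transitivity ((a1 * n1 + a2 * n2 + a3 * n3 + a4 * n4) * det3 b2 b3 b4 c2 c3 c4 d2 d3 d4
    - (b1 * n1 + b2 * n2 + b3 * n3 + b4 * n4) * det3 a2 a3 a4 c2 c3 c4 d2 d3 d4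
    + (c1 * n1 + c2 * n2 + c3 * n3 + c4 * n4) * det3 a2 a3 a4 b2 b3 b4 d2 d3 d4
    - (d1 * n1 + d2 * n2 + d3 * n3 + d4 * n4) * det3 a2 a3 a4 b2 b3 b4 c2 c3 c4).
  - unfold det3. ring.
  - rewrite Ha, Hb, Hc, Hd. ring.
Qed.

Lemma is_derive_Derive_n (f : R -> R) (k : nat) (t : R) :
  smooth f -> is_derive (Derive_n f k) t (Derive_n f (S k) t).
Proof. intros Hf. exact (Derive_correct _ t (Hf k t)). Qed.

Lemma is_lim_seq_ex_derive (f : R -> R) (u : nat -> R) (t : R) :
  (forall s, ex_derive f s) -> is_lim_seq u t -> is_lim_seq (fun m => f (u m)) (f t).
Proof.
  intros Hf. apply is_lim_seq_continuous, continuity_pt_filterlim.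
  exact (ex_derive_continuous (K := R_AbsRing) f t (Hf t)).
Qed.

Definition curvature_deriv_num (gx gy : R -> R) (t : R) : R :=
  let x1 := Derive_n gx 1 t in let y1 := Derive_n gy 1 t in
  let x2 := Derive_n gx 2 t in let y2 := Derive_n gy 2 t in
  let x3 := Derive_n gx 3 t in let y3 := Derive_n gy 3 t in
  (x1 * x1 + y1 * y1) * (x1 * y3 - y1 * x3) - 3 * (x1 * y2 - y1 * x2) * (x1 * x2 + y1 * y2).

Lemma is_derive_curvature (gx gy : R -> R) (t : R) : smooth gx -> smooth gy ->
  0 < Derive gx t ^ 2 + Derive gy t ^ 2 ->
  is_derive (curvature gx gy) t
    (curvature_deriv_num gx gy t / sqrt (Derive gx t ^ 2 + Derive gy t ^ 2) ^ 5).
Proof.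
  intros Sx Sy Hreg.
  assert (Hx1 := is_derive_Derive_n gx 1 t Sx). assert (Hx2 := is_derive_Derive_n gx 2 t Sx).
  assert (Hy1 := is_derive_Derive_n gy 1 t Sy). assert (Hy2 := is_derive_Derive_n gy 2 t Sy).
  assert (Hq := sqrt_lt_R0 _ Hreg). assert (Hqq := sqrt_sqrt _ (Rlt_le _ _ Hreg)).
  change (curvature gx gy) with (fun s =>
    (Derive_n gx 1 s * Derive_n gy 2 s - Derive_n gy 1 s * Derive_n gx 2 s)
    / sqrt (Derive_n gx 1 s ^ 2 + Derive_n gy 1 s ^ 2) ^ 3).
  change (Derive gx t) with (Derive_n gx 1 t) in *.
  change (Derive gy t) with (Derive_n gy 1 t) in *.
  unfold curvature_deriv_num.
  revert Hx1 Hx2 Hy1 Hy2 Hreg Hq Hqq.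
  generalize (Derive_n gx 1) (Derive_n gx 2) (Derive_n gy 1) (Derive_n gy 2)
    (Derive_n gx 3 t) (Derive_n gy 3 t).
  intros x1 x2 y1 y2 x3 y3 Hx1 Hx2 Hy1 Hy2 Hreg Hq Hqq.
  auto_derive.
  - replace (x1 t * (x1 t * 1) + y1 t * (y1 t * 1)) with (x1 t ^ 2 + y1 t ^ 2) by ring.
    repeat split; try (eexists; eassumption); try lra.
    apply Rgt_not_eq. repeat apply Rmult_lt_0_compat; lra.
  - rewrite (is_derive_unique (fun x : R => x1 x) t _ Hx1),
      (is_derive_unique (fun x : R => x2 x) t _ Hx2),
      (is_derive_unique (fun x : R => y1 x) t _ Hy1),
      (is_derive_unique (fun x : R => y2 x) t _ Hy2).
    replace (x1 t * (x1 t * 1) + y1 t * (y1 t * 1)) with (x1 t ^ 2 + y1 t ^ 2) by ring.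
    replace (x1 t * x1 t + y1 t * y1 t) with (x1 t ^ 2 + y1 t ^ 2) by ring.
    set (q := sqrt _) in *. rewrite <- Hqq. field. lra.
Qed.

Section Lift.

Variables gx gy : R -> R.
Hypotheses (Sx : smooth gx) (Sy : smooth gy).

(* The k-th derivative of [gx^2 + gy^2] for [k <= 3] (the last branch is [k = 3]). *)
Definition sqnorm_Dn (k : nat) (s : R) : R :=
  let x0 := gx s in let y0 := gy s in
  let x1 := Derive_n gx 1 s in let y1 := Derive_n gy 1 s in
  let x2 := Derive_n gx 2 s in let y2 := Derive_n gy 2 s in
  let x3 := Derive_n gx 3 s in let y3 := Derive_n gy 3 s in
  match k with
  | O => x0 * x0 + y0 * y0
  | 1%nat => 2 * (x0 * x1 + y0 * y1)
  | 2%nat => 2 * (x1 * x1 + x0 * x2 + y1 * y1 + y0 * y2)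
  | _ => 2 * (3 * (x1 * x2) + x0 * x3 + 3 * (y1 * y2) + y0 * y3)
  end.

Definition lift (k : nat) (s : R) : V4 :=
  (sqnorm_Dn k s, Derive_n gx k s, Derive_n gy k s, match k with O => 1 | _ => 0 end).

Definition lift_det (a b c d : R) : R := det4 (lift 0 a) (lift 1 b) (lift 2 c) (lift 3 d).

Ltac smooth_side :=
  repeat split;
  match goal with
  | |- ex_derive _ ?t =>
      first [exact (Sx 0%nat t) | exact (Sx 1%nat t) | exact (Sx 2%nat t) | exact (Sx 3%nat t)
            | exact (Sy 0%nat t) | exact (Sy 1%nat t) | exact (Sy 2%nat t) | exact (Sy 3%nat t)]
  end.

Lemma ex_derive_sqnorm_Dn (k : nat) (t : R) : ex_derive (sqnorm_Dn k) t.
Proof. destruct k as [|[|[|k]]]; unfold sqnorm_Dn; simpl; auto_derive; smooth_side. Qed.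

Lemma is_derive_dot_lift (n : V4) (k : nat) (t : R) : (k < 3)%nat ->
  is_derive (fun s => dot4 (lift k s) n) t (dot4 (lift (S k) t) n).
Proof.
  intros Hk. destruct n as [[[n1 n2] n3] n4].
  destruct k as [|[|[|k]]]; [| | |lia];
    unfold dot4, lift, sqnorm_Dn; simpl; auto_derive; try smooth_side; ring.
Qed.

Lemma lift_det_zero_of_concyclic (n : V4) (lo hi : R) (ls : list R) :
  fst (fst (fst n)) <> 0 -> NoDup ls -> (3 < length ls)%nat ->
  Forall (fun s => lo < s < hi /\ dot4 (lift 0 s) n = 0) ls ->
  exists a b c d, lo < a < hi /\ lo < b < hi /\ lo < c < hi /\ lo < d < hi /\
    lift_det a b c d = 0.
Proof.
  intros Hn Hnd Hlen Hz.
  set (h k s := dot4 (lift k s) n).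
  assert (Hder : forall m, (m <= 3)%nat ->
                   forall k t, (k < m)%nat -> is_derive (h k) t (h (S k) t))
    by (intros m Hm k t Hk; apply is_derive_dot_lift; lia).
  destruct (Rolle_iter h 1 lo hi ls (Hder 1%nat ltac:(lia)) Hnd ltac:(lia) Hz) as [b [Ib Zb]].
  destruct (Rolle_iter h 2 lo hi ls (Hder 2%nat ltac:(lia)) Hnd ltac:(lia) Hz) as [c [Ic Zc]].
  destruct (Rolle_iter h 3 lo hi ls (Hder 3%nat ltac:(lia)) Hnd ltac:(lia) Hz) as [d [Id Zd]].
  destruct ls as [|a ls]; [simpl in Hlen; lia|].
  apply Forall_inv in Hz as [Ia Za].
  exists a, b, c, d. repeat (split; [assumption|]).
  apply (det4_orthogonal _ _ _ _ n Hn); assumption.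
Qed.

Lemma is_lim_seq_lift_det (a b c d : nat -> R) (t : R) :
  is_lim_seq a t -> is_lim_seq b t -> is_lim_seq c t -> is_lim_seq d t ->
  is_lim_seq (fun m => lift_det (a m) (b m) (c m) (d m)) (lift_det t t t t).
Proof.
  intros Ha Hb Hc Hd. cbv beta iota zeta delta [lift_det lift det4 det3].
  repeat match goal with
  | |- is_lim_seq (fun m => _ + _) _ => apply is_lim_seq_plus'
  | |- is_lim_seq (fun m => _ - _) _ => apply is_lim_seq_minus'
  | |- is_lim_seq (fun m => _ * _) _ => apply is_lim_seq_mult'
  | |- is_lim_seq (fun m => sqnorm_Dn ?k (?u m)) _ =>
      apply is_lim_seq_ex_derive; [apply ex_derive_sqnorm_Dn | assumption]
  | |- is_lim_seq (fun m => Derive_n gx ?k (?u m)) _ =>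
      apply is_lim_seq_ex_derive; [apply Sx | assumption]
  | |- is_lim_seq (fun m => Derive_n gy ?k (?u m)) _ =>
      apply is_lim_seq_ex_derive; [apply Sy | assumption]
  | |- is_lim_seq (fun m => ?x) _ => apply is_lim_seq_const
  end.
Qed.

Lemma lift_det_diag (t : R) : lift_det t t t t = 2 * curvature_deriv_num gx gy t.
Proof.
  cbv beta iota zeta delta [lift_det lift det4 det3 sqnorm_Dn curvature_deriv_num].
  change (Derive_n gx 0 t) with (gx t). change (Derive_n gy 0 t) with (gy t).
  ring.
Qed.

End Lift.

Definition circle_vec (q : R * R) : V4 := (fst q * fst q + snd q * snd q, fst q, snd q, 1).

Lemma lift0_circle_vec (gx gy : R -> R) (s : R) : lift gx gy 0 s = circle_vec (gx s, gy s).
Proof. reflexivity. Qed.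

(* [2 sin th] times the equation of the circumcircle of the trapezoid: its
   center is [c + (1 - 2 r) / 2 * (u - tan (th / 2) * J u)], where [c] is the
   center of the rotation, [u = w - z] and [J] the counterclockwise rotation
   by [PI / 2]. *)
Definition trap_circle (r th : R) (z w : R * R) : V4 :=
  let '(cx, cy) := trap_center r z w in
  let ux := fst w - fst z in let uy := snd w - snd z in
  let ox := 2 * sin th * cx + (1 - 2 * r) * (sin th * ux + (1 - cos th) * uy) in
  let oy := 2 * sin th * cy + (1 - 2 * r) * (sin th * uy - (1 - cos th) * ux) in
  (2 * sin th, - 2 * ox, - 2 * oy,
   2 * (ox * fst w + oy * snd w) - 2 * sin th * (fst w * fst w + snd w * snd w)).

Lemma trapezoid_concyclic (r th : R) (z w q : R * R) :
  trapezoid r th z w q -> dot4 (circle_vec q) (trap_circle r th z w) = 0.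
Proof.
  destruct z as [zx zy], w as [wx wy].
  assert (H := sin2_cos2 th). unfold Rsqr in H.
  intros [E|[E|[E|E]]]; subst q;
    unfold trap_circle, trap_z', trap_w', rot_cw, trap_center, circle_vec, dot4; simpl;
    generalize dependent (sin th); generalize dependent (cos th); intros; nsatz.
Qed.

Definition sqdist (q q' : R * R) : R :=
  (fst q - fst q') * (fst q - fst q') + (snd q - snd q') * (snd q - snd q').

Lemma sqdist_pos (q q' : R * R) : q <> q' -> 0 < sqdist q q'.
Proof.
  destruct q as [x y], q' as [x' y']. unfold sqdist; simpl. intros Hne.
  generalize (Rle_0_sqr (x - x')) (Rle_0_sqr (y - y')). unfold Rsqr. intros.
  destruct (Req_dec x x') as [<-|Hx].
  - assert (Hy : y - y' <> 0) by (intros E; apply Hne; f_equal; lra).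
    generalize (Rsqr_pos_lt _ Hy). unfold Rsqr. lra.
  - apply Rminus_eq_contra in Hx. generalize (Rsqr_pos_lt _ Hx). unfold Rsqr. lra.
Qed.

Lemma sqdist_rot_cw (c q : R * R) (th : R) : sqdist (rot_cw c th q) c = sqdist q c.
Proof.
  assert (H := sin2_cos2 th). unfold Rsqr in H.
  unfold sqdist, rot_cw; simpl.
  generalize dependent (sin th); generalize dependent (cos th); intros; nsatz.
Qed.

Lemma rot_cw_fixed (c q : R * R) (th : R) : 0 < th < PI -> rot_cw c th q = q -> q = c.
Proof.
  intros Hth E. destruct c as [cx cy], q as [qx qy].
  unfold rot_cw in E; simpl in E. injection E as E1 E2.
  assert (Hs : 0 < sin th) by (apply sin_gt_0; apply Hth).
  set (C := cos th) in *. set (S := sin th) in *. clearbody C S.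
  assert (Hpos : 0 < (C - 1) ^ 2 + S ^ 2)
    by (generalize (pow2_ge_0 (C - 1)) (pow_lt _ 2 Hs); lra).
  assert (F1 : (qx - cx) * (C - 1) + (qy - cy) * S = 0) by lra.
  assert (F2 : - (qx - cx) * S + (qy - cy) * (C - 1) = 0) by lra.
  assert (Ex : (qx - cx) * ((C - 1) ^ 2 + S ^ 2) = 0).
  { replace (_ * _) with ((C - 1) * ((qx - cx) * (C - 1) + (qy - cy) * S)
                          - S * (- (qx - cx) * S + (qy - cy) * (C - 1))) by ring.
    rewrite F1, F2. ring. }
  assert (Ey : (qy - cy) * ((C - 1) ^ 2 + S ^ 2) = 0).
  { replace (_ * _) with (S * ((qx - cx) * (C - 1) + (qy - cy) * S)
                          + (C - 1) * (- (qx - cx) * S + (qy - cy) * (C - 1))) by ring.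
    rewrite F1, F2. ring. }
  apply Rmult_integral in Ex as [Ex|]; [|lra]. apply Rmult_integral in Ey as [Ey|]; [|lra].
  f_equal; lra.
Qed.

Definition trap_vertices (r th : R) (z w : R * R) : list (R * R) :=
  [z; w; trap_z' r th z w; trap_w' r th z w].

Lemma in_trap_vertices (r th : R) (z w q : R * R) :
  In q (trap_vertices r th z w) -> trapezoid r th z w q.
Proof. unfold trapezoid. simpl. intuition congruence. Qed.

Lemma trap_vertices_NoDup (r th : R) (z w : R * R) :
  z <> w -> 0 < r < 1 / 2 -> 0 < th < PI -> NoDup (trap_vertices r th z w).
Proof.
  intros Hzw Hr Hth.
  set (c := trap_center r z w).
  set (U := sqdist w z).
  assert (HU : 0 < U) by (apply sqdist_pos; auto).
  assert (Dz : sqdist z c = r * r * U)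
    by (unfold c, U, sqdist, trap_center; simpl; ring).
  assert (Dw : sqdist w c = (1 - r) * (1 - r) * U)
    by (unfold c, U, sqdist, trap_center; simpl; ring).
  assert (Dz' : sqdist (trap_z' r th z w) c = r * r * U)
    by (unfold trap_z'; fold c; rewrite sqdist_rot_cw; exact Dz).
  assert (Dw' : sqdist (trap_w' r th z w) c = (1 - r) * (1 - r) * U)
    by (unfold trap_w'; fold c; rewrite sqdist_rot_cw; exact Dw).
  assert (Hrr : 0 < r * r * U) by (apply Rmult_lt_0_compat; [nra | lra]).
  assert (Hrr' : 0 < (1 - r) * (1 - r) * U) by (apply Rmult_lt_0_compat; [nra | lra]).
  assert (Hne : r * r * U <> (1 - r) * (1 - r) * U).
  { intros E.
    assert (E' : (1 - 2 * r) * U = 0)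
      by (replace ((1 - 2 * r) * U) with ((1 - r) * (1 - r) * U - r * r * U) by ring; lra).
    apply Rmult_integral in E' as [|]; lra. }
  (* [z, z'] lie at distance [r |u|] from the center, [w, w'] at [(1 - r) |u|]. *)
  assert (Hcross : forall q q', sqdist q c = r * r * U ->
            sqdist q' c = (1 - r) * (1 - r) * U -> q <> q').
  { intros q q' Hq Hq' <-. rewrite Hq in Hq'. exact (Hne Hq'). }
  assert (Hnc : forall q, sqdist q c = r * r * U \/ sqdist q c = (1 - r) * (1 - r) * U -> q <> c).
  { intros q Hq E. rewrite E in Hq.
    assert (Hcc : sqdist c c = 0) by (unfold sqdist; ring).
    destruct Hq; lra. }
  assert (Hzz' : z <> trap_z' r th z w).
  { intros E. apply (Hnc z); [now left|]. symmetry in E. exact (rot_cw_fixed c z th Hth E). }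
  assert (Hww' : w <> trap_w' r th z w).
  { intros E. apply (Hnc w); [now right|]. symmetry in E. exact (rot_cw_fixed c w th Hth E). }
  unfold trap_vertices.
  repeat constructor; simpl; intros H; repeat destruct H as [H|H]; try contradiction;
    [apply Hzw | apply Hzz' | apply (Hcross z _ Dz Dw') | apply (Hcross _ w Dz' Dw)
    | apply Hww' | apply (Hcross _ _ Dz' Dw')]; congruence.
Qed.

Lemma periodic_IZR (f : R -> R) (L : R) :
  (forall t, f (t + L) = f t) -> forall (k : Z) (t : R), f (t + IZR k * L) = f t.
Proof.
  intros HP k. induction k as [|k IH|k IH] using Z.peano_ind; intros t.
  - f_equal. ring.
  - rewrite succ_IZR.
    replace (t + (IZR k + 1) * L) with (t + IZR k * L + L) by ring.
    rewrite HP. apply IH.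
  - rewrite <- Z.sub_1_r, minus_IZR, <- (IH t).
    replace (t + IZR k * L) with (t + (IZR k - 1) * L + L) by ring.
    symmetry. apply HP.
Qed.

Lemma periodic_reduce (gx gy : R -> R) (L a t : R) : 0 < L ->
  (forall t, gx (t + L) = gx t /\ gy (t + L) = gy t) ->
  exists t', a <= t' < a + L /\ gx t' = gx t /\ gy t' = gy t.
Proof.
  intros HL HP.
  destruct (archimed ((t - a) / L)) as [Hup Hup'].
  set (k := up ((t - a) / L)) in *.
  exists (t + IZR (1 - k) * L).
  assert (E : t - a = (t - a) / L * L) by (field; lra).
  split; [rewrite minus_IZR; split; nra|].
  split; apply periodic_IZR; intros s; apply HP.
Qed.

Lemma smooth_continuity_pt (f : R -> R) (t : R) : smooth f -> continuity_pt f t.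
Proof.
  intros Hf. apply continuity_pt_filterlim.
  exact (ex_derive_continuous (K := R_AbsRing) f t (Hf 0%nat t)).
Qed.

Lemma jordan_param_near (gx gy : R -> R) (L t0 eps : R) :
  smooth_jordan_curve gx gy L -> 0 <= t0 < L -> 0 < eps < L ->
  exists eta, 0 < eta /\ forall q, on_curve gx gy q -> sqdist q (gx t0, gy t0) < eta ->
    exists s, Rabs (s - t0) < eps /\ (gx s, gy s) = q.
Proof.
  intros [HL [Sx [Sy [HP [_ Hinj]]]]] Ht0 Heps.
  set (dist0 s := sqdist (gx s, gy s) (gx t0, gy t0)).
  destruct (continuity_ab_min dist0 (t0 + eps / 2) (t0 + L - eps / 2)) as [m [Hmin Hm]];
    [lra | intros c _; unfold dist0, sqdist; simpl;
           repeat first [apply continuity_pt_plus | apply continuity_pt_mult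
                        | apply continuity_pt_minus | apply continuity_pt_const; intros ? ?; reflexivity
                        | apply smooth_continuity_pt; assumption] |].
  (* By injectivity on a period, the curve stays away from [gamma t0] on the
     arc [t0 + eps / 2, t0 + L - eps / 2]. *)
  assert (Hpos : 0 < dist0 m).
  { apply sqdist_pos. intros E. injection E as E1 E2.
    destruct (Rlt_le_dec m L).
    - assert (m = t0) by (apply Hinj; lra). lra.
    - destruct (HP (m - L)) as [F1 F2]. replace (m - L + L) with m in F1, F2 by ring.
      assert (m - L = t0) by (apply Hinj; lra || congruence). lra. }
  exists (dist0 m). split; [exact Hpos|].
  intros q [s [E1 E2]] Hq.
  destruct (periodic_reduce gx gy L (t0 - eps / 2) s HL HP) as [s' [Hs' [F1 F2]]].
  exists s'. split; [|rewrite F1, F2, E1, E2; symmetry; apply surjective_pairing].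
  destruct (Rlt_le_dec s' (t0 + eps / 2)); [apply Rabs_def1; lra|].
  exfalso. assert (Hle : dist0 m <= dist0 s') by (apply Hmin; lra).
  assert (Es' : dist0 s' = sqdist q (gx t0, gy t0))
    by (unfold dist0; rewrite F1, F2, E1, E2, <- surjective_pairing; reflexivity).
  lra.
Qed.

Lemma pt_lim_sqdist (u : nat -> R * R) (p : R * R) :
  pt_lim u p -> is_lim_seq (fun n => sqdist (u n) p) 0.
Proof.
  intros [Hx Hy]. unfold sqdist.
  replace 0 with ((fst p - fst p) * (fst p - fst p) + (snd p - snd p) * (snd p - snd p)) by ring.
  apply is_lim_seq_plus'; apply is_lim_seq_mult'; apply is_lim_seq_minus';
    assumption || apply is_lim_seq_const.
Qed.

Lemma pt_lim_eventually_near (u : nat -> R * R) (p : R * R) (eta : R) :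
  pt_lim u p -> 0 < eta -> eventually (fun n => sqdist (u n) p < eta).
Proof.
  intros Hu Heta.
  generalize (proj2 (is_lim_seq_spec _ _) (pt_lim_sqdist u p Hu) (mkposreal eta Heta)).
  apply filter_imp. simpl. intros n Hn. rewrite Rminus_0_r in Hn.
  exact (Rle_lt_trans _ _ _ (Rle_abs _) Hn).
Qed.

Lemma Forall_preimage {A B : Type} (f : A -> B) (P : A -> Prop) (qs : list B) :
  Forall (fun q => exists s, P s /\ f s = q) qs ->
  exists ls, map f ls = qs /\ Forall P ls.
Proof.
  induction 1 as [|q qs [s [Hs Hfs]] _ [ls [Hmap Hls]]].
  - exists []. split; constructor.
  - exists (s :: ls). split; [simpl; congruence | constructor; assumption].
Qed.

Lemma is_lim_seq_of_inv_bound (u : nat -> R) (t : R) :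
  (forall m, Rabs (u m - t) < / (INR m + 1)) -> is_lim_seq u t.
Proof.
  intros Hu.
  assert (Hinv : is_lim_seq (fun m => / (INR m + 1)) 0).
  { replace (Finite 0) with (Rbar_inv p_infty) by reflexivity.
    apply is_lim_seq_inv; [|discriminate].
    eapply is_lim_seq_plus; [apply is_lim_seq_INR | apply is_lim_seq_const | reflexivity]. }
  apply (is_lim_seq_le_le (fun m => t - / (INR m + 1)) u (fun m => t + / (INR m + 1))).
  - intros m. specialize (Hu m). apply Rabs_def2 in Hu. lra.
  - replace (Finite t) with (Finite (t - 0)) by (f_equal; ring).
    apply is_lim_seq_minus'; [apply is_lim_seq_const | exact Hinv].
  - replace (Finite t) with (Finite (t + 0)) by (f_equal; ring).
    apply is_lim_seq_plus'; [apply is_lim_seq_const | exact Hinv].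
Qed.

Lemma is_lim_seq_choice4 (P : R -> R -> R -> R -> Prop) (t : R) :
  (forall eps, 0 < eps -> exists a b c d,
     Rabs (a - t) < eps /\ Rabs (b - t) < eps /\ Rabs (c - t) < eps /\ Rabs (d - t) < eps /\
     P a b c d) ->
  exists a b c d : nat -> R, (forall m, P (a m) (b m) (c m) (d m)) /\
    is_lim_seq a t /\ is_lim_seq b t /\ is_lim_seq c t /\ is_lim_seq d t.
Proof.
  intros HP.
  assert (Hm : forall m : nat, exists v : R * R * R * R, let '(a, b, c, d) := v in
    Rabs (a - t) < / (INR m + 1) /\ Rabs (b - t) < / (INR m + 1) /\
    Rabs (c - t) < / (INR m + 1) /\ Rabs (d - t) < / (INR m + 1) /\ P a b c d).
  { intros m. destruct (HP (/ (INR m + 1))) as (a & b & c & d & H).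
    - apply Rinv_0_lt_compat. generalize (pos_INR m). lra.
    - now exists (a, b, c, d). }
  destruct (choice _ Hm) as [v Hv].
  exists (fun m => fst (fst (fst (v m)))), (fun m => snd (fst (fst (v m)))),
    (fun m => snd (fst (v m))), (fun m => snd (v m)).
  repeat split; [|apply is_lim_seq_of_inv_bound ..]; intros m;
    specialize (Hv m); destruct (v m) as [[[a b] c] d]; simpl; tauto.
Qed.

Lemma trap_vertices_eventually_near (r : R) (th : nat -> R) (zs ws : nat -> R * R)
  (p : R * R) (eta : R) :
  pt_lim zs p -> pt_lim ws p ->
  pt_lim (fun n => trap_z' r (th n) (zs n) (ws n)) p ->
  pt_lim (fun n => trap_w' r (th n) (zs n) (ws n)) p -> 0 < eta ->
  eventually (fun n => Forall (fun q => sqdist q p < eta) (trap_vertices r (th n) (zs n) (ws n))).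
Proof.
  intros Hz Hw Hz' Hw' Heta.
  generalize (filter_and _ _ (filter_and _ _ (pt_lim_eventually_near _ _ _ Hz Heta)
                                              (pt_lim_eventually_near _ _ _ Hw Heta))
                             (filter_and _ _ (pt_lim_eventually_near _ _ _ Hz' Heta)
                                              (pt_lim_eventually_near _ _ _ Hw' Heta))).
  apply filter_imp. intros n [[? ?] [? ?]]. repeat constructor; assumption.
Qed.

Section ShrinkingTrapezoids.

Variables (gx gy : R -> R) (L r : R) (th : nat -> R) (zs ws : nat -> R * R) (t0 : R).
Hypotheses (HJ : smooth_jordan_curve gx gy L) (Hr : 0 < r < 1 / 2)
  (Hth : forall n, 0 < th n < PI) (Hzw : forall n, zs n <> ws n)
  (Hins : forall n, inscribed gx gy (trapezoid r (th n) (zs n) (ws n)))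
  (Ht0 : 0 <= t0 < L)
  (Hnear : forall eta, 0 < eta -> eventually (fun n =>
     Forall (fun q => sqdist q (gx t0, gy t0) < eta) (trap_vertices r (th n) (zs n) (ws n)))).

Lemma lift_det_zero_near (eps : R) : 0 < eps < L ->
  exists a b c d,
    Rabs (a - t0) < eps /\ Rabs (b - t0) < eps /\ Rabs (c - t0) < eps /\ Rabs (d - t0) < eps /\
    lift_det gx gy a b c d = 0.
Proof.
  intros Heps.
  destruct (jordan_param_near gx gy L t0 eps HJ Ht0 Heps) as [eta [Heta Hclose]].
  destruct (Hnear eta Heta) as [N HN]. specialize (HN N (le_n N)).
  set (T := trapezoid r (th N) (zs N) (ws N)).
  destruct (Forall_preimage (fun s => (gx s, gy s))
              (fun s => t0 - eps < s < t0 + eps /\ T (gx s, gy s))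
              (trap_vertices r (th N) (zs N) (ws N))) as [ls [Hmap Hls]].
  { apply Forall_forall. intros q Hq.
    destruct (Hclose q) as [s [Hs Es]].
    - apply (Hins N), in_trap_vertices, Hq.
    - exact (proj1 (Forall_forall _ _) HN q Hq).
    - apply Rabs_def2 in Hs. exists s. rewrite Es.
      split; [split; [lra | apply in_trap_vertices, Hq] | reflexivity]. }
  destruct (lift_det_zero_of_concyclic gx gy (proj1 (proj2 HJ)) (proj1 (proj2 (proj2 HJ)))
              (trap_circle r (th N) (zs N) (ws N)) (t0 - eps) (t0 + eps) ls)
    as (a & b & c & d & Ha & Hb & Hc & Hd & HW).
  - simpl. specialize (Hth N). assert (0 < sin (th N)) by (apply sin_gt_0; apply Hth). lra.
  - apply (NoDup_map_inv (fun s => (gx s, gy s))). rewrite Hmap.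
    apply trap_vertices_NoDup; auto.
  - rewrite <- (length_map (fun s => (gx s, gy s))), Hmap. simpl. lia.
  - eapply Forall_impl; [|exact Hls]. intros s [Hs HT]. split; [exact Hs|].
    rewrite lift0_circle_vec. apply trapezoid_concyclic, HT.
  - exists a, b, c, d. repeat split; try exact HW; apply Rabs_def1; lra.
Qed.

Lemma lift_det_diag_zero : lift_det gx gy t0 t0 t0 t0 = 0.
Proof.
  destruct HJ as (HL & Sx & Sy & _).
  destruct (is_lim_seq_choice4 (fun a b c d => lift_det gx gy a b c d = 0) t0)
    as (a & b & c & d & Hz & Ha & Hb & Hc & Hd).
  { intros eps Heps.
    destruct (lift_det_zero_near (Rmin eps (L / 2))) as (a & b & c & d & H).
    - split; [apply Rmin_pos; lra | generalize (Rmin_r eps (L / 2)); lra].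
    - generalize (Rmin_l eps (L / 2)). exists a, b, c, d. lra. }
  assert (Hlim := is_lim_seq_lift_det gx gy Sx Sy a b c d t0 Ha Hb Hc Hd).
  apply is_lim_seq_unique in Hlim.
  rewrite (Lim_seq_ext _ (fun _ => 0) Hz), Lim_seq_const in Hlim.
  injection Hlim as Hlim. symmetry. exact Hlim.
Qed.

End ShrinkingTrapezoids.

Theorem corollary3p3 (gx gy : R -> R) (L r : R) (th : nat -> R)
  (zs ws : nat -> R * R) (p : R * R) :
  smooth_jordan_curve gx gy L ->
  0 < r < 1 / 2 ->
  (forall n, 0 < th n < PI) ->
  (forall n, zs n <> ws n) ->
  (forall n, inscribed gx gy (trapezoid r (th n) (zs n) (ws n))) ->
  on_curve gx gy p ->
  pt_lim zs p ->
  pt_lim ws p ->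
  pt_lim (fun n => trap_z' r (th n) (zs n) (ws n)) p ->
  pt_lim (fun n => trap_w' r (th n) (zs n) (ws n)) p ->
  is_vertex gx gy p.
Proof.
  intros HJ Hr Hth Hzw Hins [t1 [E1 E2]] Hz Hw Hz' Hw'.
  pose proof HJ as (HL & Sx & Sy & HP & Hreg & _).
  destruct (periodic_reduce gx gy L 0 t1 HL HP) as [t0 [Ht0 [F1 F2]]].
  assert (Hp : p = (gx t0, gy t0)) by (destruct p; simpl in *; congruence).
  subst p.
  assert (HW := lift_det_diag_zero gx gy L r th zs ws t0 HJ Hr Hth Hzw Hins
                  ltac:(lra) (fun eta => trap_vertices_eventually_near r th zs ws _ eta Hz Hw Hz' Hw')).
  rewrite lift_det_diag in HW.
  exists t0. split; [reflexivity | split; [reflexivity|]].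
  rewrite (is_derive_unique _ _ _ (is_derive_curvature gx gy t0 Sx Sy (Hreg t0))).
  replace (curvature_deriv_num gx gy t0) with 0 by lra.
  unfold Rdiv. apply Rmult_0_l.
Qed.
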